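(* For every integer $q\ge2$, the formal codegrees $(\mathfrak{c}_s)$ of the interpolated fusion ring $\mathcal{R}_q$ satisfy $2\sum_s\frac{1}{\mathfrak{c}_s^2}\le1+\frac{1}{\mathfrak{c}_{C_0}}$, where $C_0$ is the first column of the table (so $\mathfrak{c}_{C_0}=\mathrm{FPdim}(\mathcal{R}_q)$).
   Context: $\zeta_n=\exp(2\pi i/n)$. For integer $q\ge2$, $\mathcal{R}_q$ is the commutative fusion ring whose basis is the set of rows of the formal table $T_q=(\lambda_{x,s})$ below, with eigentable $T_q$ and structure constants $N_{x,y}^z=\sum_s\lambda_{x,s}\lambda_{y,s}\overline{\lambda_{z,s}}/\mathfrak{c}_s$, where the formal codegrees are $\mathfrak{c}_s=\sum_x|\lambda_{x,s}|^2$. Table $T_q$ (rows $x_{d,c}$; entries listed in the column order given): Case $q$ even. Columns: $C_0$; $C_1$; $A_k$ ($1\le k\le\frac{q-2}{2}$); $B_k$ ($1\le k\le\frac q2$). Rows: $x_{1,1}$: $1,1,1,1$. $x_{q-1,c}$ ($1\le c\le \frac q2$): $q-1,\,-1,\,0,\,-\zeta_{q+1}^{kc}-\zeta_{q+1}^{-kc}$. $x_{q,1}$: $q,0,1,-1$. $x_{q+1,c}$ ($1\le c\le\frac{q-2}{2}$): $q+1,\,1,\,\zeta_{q-1}^{kc}+\zeta_{q-1}^{-kc},\,0$. Case $q\equiv-1\pmod 4$. Columns: $C_0$; $D_k$ ($k\in\{1,2\}$); $A_k$ ($1\le k\le\frac{q-3}{4}$); $B_k$ ($1\le k\le\frac{q-3}{4}$);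 $E$ (with $k=\frac{q+1}{4}$). Rows: $x_{1,1}$: all $1$. $x_{\frac{q-1}{2},c}$ ($c\in\{1,2\}$): $\frac{q-1}2,\ \frac{-1+i(-1)^{k+c}\sqrt q}{2},\ 0,\ (-1)^{k+1},\ (-1)^{k+1}$. $x_{q-1,c}$ ($1\le c\le\frac{q-3}4$): $q-1,\,-1,\,0,\,-\zeta_{q+1}^{2kc}-\zeta_{q+1}^{-2kc},\,-2(-1)^c$. $x_{q,1}$: $q,0,1,-1,-1$. $x_{q+1,c}$ ($1\le c\le\frac{q-3}4$): $q+1,\,1,\,\zeta_{q-1}^{2kc}+\zeta_{q-1}^{-2kc},\,0,\,0$. Case $q\equiv1\pmod4$. Columns: $C_0$; $D_k$ ($k\in\{1,2\}$); $A_k$ ($1\le k\le\frac{q-5}4$); $E$ (with $k=\frac{q-1}4$); $B_k$ ($1\le k\le\frac{q-1}4$). Rows: $x_{1,1}$: all $1$. $x_{\frac{q+1}2,c}$ ($c\in\{1,2\}$): $\frac{q+1}2,\ \frac{1+(-1)^{k+c}\sqrt q}{2},\ (-1)^k,\ (-1)^k,\ 0$. $x_{q-1,c}$ ($1\le c\le\frac{q-1}4$): $q-1,\,-1,\,0,\,0,\,-\zeta_{q+1}^{2kc}-\zeta_{q+1}^{-2kc}$. $x_{q,1}$: $q,0,1,1,-1$. $x_{q+1,c}$ ($1\le c\le\frac{q-5}4$): $q+1,\,1,\,\zeta_{q-1}^{2kc}+\zeta_{q-1}^{-2kc},\,2(-1)^c,\,0$. *)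

From HB Require Import structures.
From mathcomp Require Import all_boot all_order all_algebra.
From mathcomp Require Import reals trigo.
From mathcomp Require Import complex.
Set Implicit Arguments. Unset Strict Implicit. Unset Printing Implicit Defensive.
Import Order.TTheory GRing.Theory Num.Theory.
Local Open Scope ring_scope.
Local Open Scope complex_scope.

Section FusionTable.
Variable R : realType.
Local Notation C := R[i].

Definition zeta (n : nat) : C := (cos (pi *+ 2 / n%:R) +i* sin (pi *+ 2 / n%:R)).

Definition cs (n m : nat) : C := zeta n ^+ m + zeta n ^- m.

Definition fam (n : nat) (f : nat -> C) : seq C := [seq f c | c <- iota 1 n].

Definition sgn (n : nat) : C := (-1) ^+ n.

(* A column of T_q is the list of its entries in the row order
   x_{1,1}, <first family>, <second family>, x_{q,1}, <third family>. *)

(* rows: x_{1,1}; x_{q-1,c} (1<=c<=q/2); x_{q,1}; x_{q+1,c} (1<=c<=(q-2)/2) *)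
Definition col_even (q : nat) (a : C) (f : nat -> C) (b : C) (g : nat -> C) : seq C :=
  a :: fam (q %/ 2) f ++ b :: fam ((q - 2) %/ 2) g.

Definition table_even (q : nat) : seq (seq C) :=
  let qC := (q%:R : C) in
  [:: col_even q 1 (fun _ => qC - 1) qC (fun _ => qC + 1)  (* C_0 *)
    ; col_even q 1 (fun _ => -1) 0 (fun _ => 1) ]           (* C_1 *)
  ++ [seq col_even q 1 (fun _ => 0) 1 (fun c => cs (q - 1) (k * c))
       | k <- iota 1 ((q - 2) %/ 2)]                         (* A_k *)
  ++ [seq col_even q 1 (fun c => - cs (q + 1) (k * c)) (-1) (fun _ => 0)
       | k <- iota 1 (q %/ 2)].                              (* B_k *)

(* rows: x_{1,1}; x_{(q-1)/2,c} (c in {1,2}); x_{q-1,c} (1<=c<=(q-3)/4);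
         x_{q,1}; x_{q+1,c} (1<=c<=(q-3)/4) *)
Definition col_m1 (q : nat) (a : C) (h f : nat -> C) (b : C) (g : nat -> C) : seq C :=
  a :: fam 2 h ++ fam ((q - 3) %/ 4) f ++ b :: fam ((q - 3) %/ 4) g.

Definition table_m1 (q : nat) : seq (seq C) :=
  let qC := (q%:R : C) in
  let m := ((q - 3) %/ 4)%N in
  let kE := ((q + 1) %/ 4)%N in
  [:: col_m1 q 1 (fun _ => (qC - 1) / 2) (fun _ => qC - 1) qC (fun _ => qC + 1)] (* C_0 *)
  ++ [seq col_m1 q 1 (fun c => (-1 + 'i * sgn (k + c) * sqrtC qC) / 2)
          (fun _ => -1) 0 (fun _ => 1) | k <- iota 1 2]                          (* D_k *)
  ++ [seq col_m1 q 1 (fun _ => 0) (fun _ => 0) 1 (fun c => cs (q - 1) (2 * k * c))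
       | k <- iota 1 m]                                                           (* A_k *)
  ++ [seq col_m1 q 1 (fun _ => sgn (k + 1)) (fun c => - cs (q + 1) (2 * k * c))
          (-1) (fun _ => 0) | k <- iota 1 m]                                      (* B_k *)
  ++ [:: col_m1 q 1 (fun _ => sgn (kE + 1)) (fun c => - (2 * sgn c)) (-1)
          (fun _ => 0)].                                                          (* E *)

(* rows: x_{1,1}; x_{(q+1)/2,c} (c in {1,2}); x_{q-1,c} (1<=c<=(q-1)/4);
         x_{q,1}; x_{q+1,c} (1<=c<=(q-5)/4) *)
Definition col_p1 (q : nat) (a : C) (h f : nat -> C) (b : C) (g : nat -> C) : seq C :=
  a :: fam 2 h ++ fam ((q - 1) %/ 4) f ++ b :: fam ((q - 5) %/ 4) g.

Definition table_p1 (q : nat) : seq (seq C) :=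
  let qC := (q%:R : C) in
  let kE := ((q - 1) %/ 4)%N in
  [:: col_p1 q 1 (fun _ => (qC + 1) / 2) (fun _ => qC - 1) qC (fun _ => qC + 1)] (* C_0 *)
  ++ [seq col_p1 q 1 (fun c => (1 + sgn (k + c) * sqrtC qC) / 2)
          (fun _ => -1) 0 (fun _ => 1) | k <- iota 1 2]                          (* D_k *)
  ++ [seq col_p1 q 1 (fun _ => sgn k) (fun _ => 0) 1 (fun c => cs (q - 1) (2 * k * c))
       | k <- iota 1 ((q - 5) %/ 4)]                                              (* A_k *)
  ++ [:: col_p1 q 1 (fun _ => sgn kE) (fun _ => 0) 1 (fun c => 2 * sgn c)]        (* E *)
  ++ [seq col_p1 q 1 (fun _ => 0) (fun c => - cs (q + 1) (2 * k * c)) (-1)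
          (fun _ => 0) | k <- iota 1 ((q - 1) %/ 4)].                             (* B_k *)

(* The formal table T_q, as the list of its columns (first column C_0). *)
Definition table (q : nat) : seq (seq C) :=
  if ~~ odd q then table_even q
  else if (q %% 4 == 3)%N then table_m1 q else table_p1 q.

Definition codegree (col : seq C) : C := \sum_(x <- col) `|x| ^+ 2.

End FusionTable.

From HB Require Import structures.
From mathcomp Require Import all_boot all_order all_algebra.
From mathcomp Require Import reals trigo.
From mathcomp Require Import complex.
From mathcomp Require Import ring lra zify.
Set Implicit Arguments.
Unset Strict Implicit.
Unset Printing Implicit Defensive.
Import Order.TTheory GRing.Theory Num.Theory.
Local Open Scope ring_scope.
Local Open Scope complex_scope.

(* Every column of T_q other than C_0 has a codegree in closed form: q for
   C_1 and the D_k, q - 1 or q + 1 for the A_k, B_k (q even) and E, and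
   (q - 1)/2 or (q + 1)/2 for the A_k, B_k (q odd).  The cosine entries enter
   only through sums of (2 cos (c psi))^2 for c = 1..M, which telescope to
   2M - 1 + sin ((2M + 1) psi) / sin psi; for the angles psi occurring in the
   table, (2M + 1) psi or (2M + 2) psi is a multiple of 2 pi.  With these
   values the sum of 1/c_s^2 over the columns s <> C_0 is at most 1/2, and
   since c_{C_0} >= q^2 >= 4 we also have 2/c_{C_0}^2 <= 1/c_{C_0}. *)

Section Inequalities.
Variable R : realFieldType.
Implicit Types a b c x : R.

Lemma ler_pdivr_sqr a b c : 0 < b -> a <= c * b ^+ 2 -> a / b ^+ 2 <= c.
Proof. by move=> b_gt0; rewrite ler_pdivrMr // exprn_gt0. Qed.

Lemma invr_sqr_le a b : 0 < b -> 1 <= a * b ^+ 2 -> b ^- 2 <= a.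
Proof. by move=> b_gt0; rewrite -div1r; apply: ler_pdivr_sqr. Qed.

Lemma codegree_ineqR c S : 2 <= c -> S <= 2^-1 -> 2 * (c ^- 2 + S) <= 1 + c^-1.
Proof.
move=> c_ge2 S_le.
have inv_le : c^-1 <= 2^-1 by rewrite lef_pV2 ?posrE //; lra.
have inv_ge0 : 0 <= c^-1 by rewrite invr_ge0; lra.
rewrite -exprVn expr2; nra.
Qed.

Lemma tail_even_le x : 1 <= x ->
  (2 * x) ^- 2 + (x - 1) * (2 * x - 1) ^- 2 + x * (2 * x + 1) ^- 2 <= 2^-1.
Proof.
move=> x_ge1.
have t1 : (2 * x) ^- 2 <= 4^-1 by apply: invr_sqr_le; nra.
have t2 : (x - 1) * (2 * x - 1) ^- 2 <= 8^-1.
  by apply: ler_pdivr_sqr; have := sqr_ge0 (2 * x - 3); nra.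
have t3 : x * (2 * x + 1) ^- 2 <= 8^-1.
  by apply: ler_pdivr_sqr; have := sqr_ge0 (2 * x - 1); nra.
lra.
Qed.

Lemma tail_m1_le x : 0 <= x ->
  2 * (4 * x + 3) ^- 2 + x * (2 * x + 1) ^- 2 + x * (2 * x + 2) ^- 2
    + (4 * x + 4) ^- 2 <= 2^-1.
Proof.
move=> x_ge0.
have t1 : (4 * x + 3) ^- 2 <= 9^-1.
  by apply: invr_sqr_le; have := sqr_ge0 x; nra.
have t2 : x * (2 * x + 1) ^- 2 <= 8^-1.
  by apply: ler_pdivr_sqr; have := sqr_ge0 (2 * x - 1); nra.
have t3 : x * (2 * x + 2) ^- 2 <= 16^-1.
  by apply: ler_pdivr_sqr; have := sqr_ge0 (x - 1); nra.
have t4 : (4 * x + 4) ^- 2 <= 16^-1.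
  by apply: invr_sqr_le; have := sqr_ge0 x; nra.
lra.
Qed.

Lemma tail_p1_le x : 1 <= x ->
  2 * (4 * x + 1) ^- 2 + (x - 1) * (2 * x) ^- 2 + (4 * x) ^- 2
    + x * (2 * x + 1) ^- 2 <= 2^-1.
Proof.
move=> x_ge1.
have t1 : (4 * x + 1) ^- 2 <= 25^-1 by apply: invr_sqr_le; nra.
have t2 : (x - 1) * (2 * x) ^- 2 <= 16^-1.
  by apply: ler_pdivr_sqr; have := sqr_ge0 (x - 2); nra.
have t3 : (4 * x) ^- 2 <= 16^-1 by apply: invr_sqr_le; nra.
have t4 : x * (2 * x + 1) ^- 2 <= 8^-1.
  by apply: ler_pdivr_sqr; have := sqr_ge0 (2 * x - 1); nra.
lra.
Qed.

End Inequalities.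

Section IotaSums.
Variable R : pzRingType.

Lemma sum_iota_cst M (x : R) : \sum_(k <- iota 1 M) x = M%:R * x.
Proof. by rewrite big_const_seq count_predT size_iota iter_addr_0 mulr_natl. Qed.

Lemma sum_iota_eq_cst M (F : nat -> R) x : (forall k, (0 < k <= M)%N -> F k = x) ->
  \sum_(k <- iota 1 M) F k = M%:R * x.
Proof.
move=> Fx; rewrite -sum_iota_cst; apply: eq_big_seq => k.
by rewrite mem_iota => k_range; apply: Fx; lia.
Qed.

End IotaSums.

Section Trigonometry.
Variable R : realType.
Implicit Types psi : R.

Lemma sin_mul_sum_sqr_cos psi M :
  sin psi * \sum_(c <- iota 1 M) (2 * cos (c%:R * psi)) ^+ 2
  = (2 * M%:R - 1) * sin psi + sin ((2 * M + 1)%:R * psi).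
Proof.
elim: M => [|M IH]; first by rewrite big_nil mulr0 add0n mul1r; ring.
rewrite -{1}[M.+1]addn1 iotaD big_cat big_seq1 /= add1n mulrDr IH.
set a := M.+1%:R * psi.
have -> : (2 * M + 1)%:R * psi = a + a - psi by rewrite /a natrD natrM -natr1; ring.
have -> : (2 * M.+1 + 1)%:R * psi = a + a + psi by rewrite /a natrD natrM; ring.
have sin2a : sin (a + a) = 2 * sin a * cos a by rewrite sinD; ring.
have cos2a : cos (a + a) = cos a ^+ 2 - sin a ^+ 2 by rewrite cosD; ring.
rewrite sinB [sin (a + a + psi)]sinD !sin2a !cos2a -[M.+1%:R]natr1 sin2cos2; ring.
Qed.

Definition theta (n : nat) : R := pi *+ 2 / n%:R.

Lemma natr_mul_theta a n k : (0 < n)%N -> (a = n * k)%N ->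
  a%:R * theta n = (pi *+ 2) *+ k.
Proof.
move=> n_gt0 ->; have n_neq0 : n%:R != 0 :> R by rewrite pnatr_eq0 -lt0n.
by rewrite /theta natrM -mulr_natr; field.
Qed.

Lemma sin_theta_gt0 j n : (0 < j)%N -> (2 * j < n)%N -> 0 < sin (j%:R * theta n).
Proof.
move=> j_gt0 jn; have pi_gt0 := pi_gt0 R.
have n_gt0 : 0 < n%:R :> R by rewrite ltr0n; lia.
have j_gt0' : 0 < j%:R :> R by rewrite ltr0n.
have jn' : 2 * j%:R < n%:R :> R by rewrite -natrM ltr_nat.
have -> : j%:R * theta n = 2 * j%:R * pi / n%:R by rewrite /theta -mulr_natr; ring.
apply: sin_gt0_pi; rewrite divr_gt0 ?mulr_gt0 //= ltr_pdivrMr //; nra.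
Qed.

End Trigonometry.

Section SquaredNorm.
Variable R : realType.
Local Notation C := R[i].
Implicit Types x y : C.

Definition sqnorm x : R := complex.Re x ^+ 2 + complex.Im x ^+ 2.

Lemma sqr_normc x : `|x| ^+ 2 = (sqnorm x)%:C.
Proof. by rewrite add_Re2_Im2. Qed.

Lemma sqnorm_ge0 x : 0 <= sqnorm x.
Proof. by rewrite addr_ge0 ?sqr_ge0. Qed.

Lemma sqnorm_real (r : R) : sqnorm r%:C = r ^+ 2.
Proof. by rewrite /sqnorm /= expr0n addr0. Qed.

Lemma sqnorm0 : sqnorm 0 = 0.
Proof. by rewrite /sqnorm /= expr0n addr0. Qed.

Lemma sqnorm1 : sqnorm 1 = 1.
Proof. by rewrite /sqnorm /= expr1n expr0n addr0. Qed.

Lemma sqnorm_nat n : sqnorm n%:R = n%:R ^+ 2.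
Proof. by rewrite -sqnorm_real rmorph_nat. Qed.

Lemma sqnormM x y : sqnorm (x * y) = sqnorm x * sqnorm y.
Proof. by case: x => a b; case: y => c d; rewrite /sqnorm /=; ring. Qed.

Lemma sqnormN x : sqnorm (- x) = sqnorm x.
Proof. by case: x => a b; rewrite /sqnorm /=; ring. Qed.

Lemma sqnormV x : sqnorm x^-1 = (sqnorm x)^-1.
Proof.
by apply: (@complexI R); rewrite fmorphV -sqr_normc normfV exprVn sqr_normc.
Qed.

Lemma sqnorm_half x : sqnorm (x / 2) = sqnorm x / 4.
Proof. by rewrite sqnormM sqnormV sqnorm_nat; congr (_ / _); ring. Qed.

Lemma sgnE n : sgn R n = ((-1) ^+ n)%:C.
Proof. by rewrite /sgn rmorphXn rmorphN1. Qed.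

Lemma sqnorm_sgn n : sqnorm (sgn R n) = 1.
Proof. by rewrite sgnE sqnorm_real sqrr_sign. Qed.

Lemma sqrtC_nat n : exists2 r : R, sqrtC (n%:R : C) = r%:C & r ^+ 2 = n%:R.
Proof.
exists (Num.sqrt n%:R); last by rewrite sqr_sqrtr ?ler0n.
have -> : n%:R = (Num.sqrt n%:R)%:C ^+ 2 :> C.
  by rewrite -rmorphXn sqr_sqrtr ?ler0n // rmorph_nat.
by rewrite sqrCK // ler0c sqrtr_ge0.
Qed.

Lemma sqnorm_D_m1 n s :
  sqnorm ((-1 + 'i * sgn R s * sqrtC n%:R) / 2) = (1 + n%:R) / 4.
Proof.
have [r -> r2] := sqrtC_nat n.
rewrite sqnorm_half sgnE /sqnorm /=; simpc.
by rewrite exprMn sqrr_sign r2 sqrrN expr1n mul1r.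
Qed.

Lemma sqnorm_D_p1 n k :
  sqnorm ((1 + sgn R (k + 1) * sqrtC n%:R) / 2)
  + sqnorm ((1 + sgn R (k + 2) * sqrtC n%:R) / 2) = (1 + n%:R) / 2.
Proof.
have [r -> <-] := sqrtC_nat n.
rewrite !sqnorm_half !sgnE (addnS k 1) exprS /sqnorm /=; simpc.
rewrite expr0n !addr0.
transitivity ((2 + 2 * ((-1) ^+ (k + 1)) ^+ 2 * r ^+ 2) / 4); first by ring.
by rewrite sqrr_sign; field.
Qed.

Lemma zetaX n j : zeta R n ^+ j = cos (j%:R * theta R n) +i* sin (j%:R * theta R n).
Proof.
elim: j => [|j IH]; first by rewrite expr0 mul0r cos0 sin0.
rewrite exprS IH /zeta -/(theta R n) -natr1 mulrDl mul1r cosD sinD; simpc.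
by congr (_ +i* _); ring.
Qed.

Lemma cs_real n j : cs R n j = (2 * cos (j%:R * theta R n))%:C.
Proof.
rewrite /cs zetaX; set t := j%:R * theta R n.
have -> : (cos t +i* sin t)^-1 = cos t -i* sin t.
  by apply: mulr1_eq; simpc; rewrite -!expr2 cos2Dsin2 [sin t * _]mulrC addNr.
by simpc; congr (_ +i* _); ring.
Qed.

Lemma sqnorm_cs n j : sqnorm (cs R n j) = (2 * cos (j%:R * theta R n)) ^+ 2.
Proof. by rewrite cs_real sqnorm_real. Qed.

Lemma sum_sqnorm_cs_odd M n j k : (0 < j)%N -> (2 * j < n)%N ->
  ((2 * M + 1) * j = n * k)%N ->
  \sum_(c <- iota 1 M) sqnorm (cs R n (j * c)) = 2 * M%:R - 1.
Proof.
move=> j_gt0 jn jM; have sin_gt0 := @sin_theta_gt0 R j n j_gt0 jn.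
apply: (mulfI (lt0r_neq0 sin_gt0)).
under eq_bigr => c _ do rewrite sqnorm_cs natrM [j%:R * _]mulrC -mulrA.
rewrite sin_mul_sum_sqr_cos mulrA -(natrM R (2 * M + 1) j).
rewrite (@natr_mul_theta R _ _ _ _ jM); last lia.
by rewrite -[_ *+ k]add0r (periodicn (@sinD2pi R)) sin0 addr0 mulrC.
Qed.

Lemma sum_sqnorm_cs_even M n j k : (0 < j)%N -> (2 * j < n)%N ->
  ((2 * M + 2) * j = n * k)%N ->
  \sum_(c <- iota 1 M) sqnorm (cs R n (j * c)) = 2 * M%:R - 2.
Proof.
move=> j_gt0 jn jM; have sin_gt0 := @sin_theta_gt0 R j n j_gt0 jn.
apply: (mulfI (lt0r_neq0 sin_gt0)).
under eq_bigr => c _ do rewrite sqnorm_cs natrM [j%:R * _]mulrC -mulrA.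
rewrite sin_mul_sum_sqr_cos.
have -> : (2 * M + 1)%:R * (j%:R * theta R n)
    = - (j%:R * theta R n) + ((2 * M + 2) * j)%:R * theta R n.
  by rewrite natrM !natrD; ring.
rewrite (@natr_mul_theta R _ _ _ _ jM); last lia.
by rewrite (periodicn (@sinD2pi R)) sinN; ring.
Qed.

End SquaredNorm.

Section Codegrees.
Variable R : realType.
Local Notation C := R[i].

Definition codegreeR (col : seq C) : R := \sum_(x <- col) sqnorm x.

Lemma codegreeE col : codegree col = (codegreeR col)%:C.
Proof. by rewrite rmorph_sum; apply: eq_bigr => x _; rewrite sqr_normc. Qed.

Lemma sqnorm_le_codegreeR (x : C) col : x \in col -> sqnorm x <= codegreeR col.
Proof.
move=> x_col; rewrite /codegreeR (big_rem _ x_col) /= lerDl.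
by rewrite sumr_ge0 // => y _; apply: sqnorm_ge0.
Qed.

Lemma codegree_ineq_of_tail (t : seq (seq C)) :
  2 <= codegreeR (head [::] t) ->
  \sum_(s <- behead t) codegreeR s ^- 2 <= 2^-1 ->
  2 * \sum_(s <- t) codegree s ^- 2 <= 1 + (codegree (head [::] t))^-1.
Proof.
case: t => [|c0 t] /=; first by rewrite /codegreeR !big_nil => ?; exfalso; lra.
move=> c0_ge2 tail_le; rewrite big_cons.
have -> : \sum_(s <- t) codegree s ^- 2 = (\sum_(s <- t) codegreeR s ^- 2)%:C.
  by rewrite rmorph_sum; apply: eq_bigr => s _; rewrite codegreeE fmorphV rmorphXn.
move: (codegree_ineqR c0_ge2 tail_le); rewrite -lecR codegreeE.
by rewrite !(rmorphD, rmorphM, fmorphV, rmorphXn, rmorph1, rmorph_nat).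
Qed.

Lemma codegreeR_col_even q a f b g : codegreeR (col_even q a f b g) =
  sqnorm a + \sum_(c <- iota 1 (q %/ 2)) sqnorm (f c)
  + (sqnorm b + \sum_(c <- iota 1 ((q - 2) %/ 2)) sqnorm (g c)).
Proof. by rewrite /codegreeR big_cons big_cat big_cons !big_map addrA. Qed.

Lemma codegreeR_col_m1 q a h f b g : codegreeR (col_m1 q a h f b g) =
  sqnorm a + \sum_(c <- iota 1 2) sqnorm (h c)
  + \sum_(c <- iota 1 ((q - 3) %/ 4)) sqnorm (f c)
  + (sqnorm b + \sum_(c <- iota 1 ((q - 3) %/ 4)) sqnorm (g c)).
Proof. by rewrite /codegreeR big_cons !big_cat big_cons !big_map !addrA. Qed.

Lemma codegreeR_col_p1 q a h f b g : codegreeR (col_p1 q a h f b g) =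
  sqnorm a + \sum_(c <- iota 1 2) sqnorm (h c)
  + \sum_(c <- iota 1 ((q - 1) %/ 4)) sqnorm (f c)
  + (sqnorm b + \sum_(c <- iota 1 ((q - 5) %/ 4)) sqnorm (g c)).
Proof. by rewrite /codegreeR big_cons !big_cat big_cons !big_map !addrA. Qed.

End Codegrees.

Section Table.
Variable R : realType.

Lemma nat_mem_head_table q : q%:R \in head [::] (table R q).
Proof.
rewrite /table; case: ifP => _; last case: ifP => _.
- by rewrite /= /col_even inE mem_cat mem_head !orbT.
- by rewrite /= /col_m1 inE !mem_cat mem_head !orbT.
- by rewrite /= /col_p1 inE !mem_cat mem_head !orbT.
Qed.

Lemma tail_table_evenE m : (0 < m)%N ->
  \sum_(s <- behead (table_even R (2 * m))) codegreeR s ^- 2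
  = (2 * m%:R) ^- 2 + (m%:R - 1) * (2 * m%:R - 1) ^- 2 + m%:R * (2 * m%:R + 1) ^- 2.
Proof.
move=> m_gt0.
have half_q : ((2 * m) %/ 2 = m)%N by lia.
have half_q2 : ((2 * m - 2) %/ 2 = m - 1)%N by lia.
have m1 : (m - 1)%:R = m%:R - 1 :> R by rewrite natrB.
rewrite /table_even /= big_cons big_cat /= !big_map.
rewrite codegreeR_col_even half_q half_q2 sqnorm1 sqnorm0 sqnormN sqnorm1 !sum_iota_cst.
rewrite (@sum_iota_eq_cst _ (m - 1) _ ((2 * m%:R - 1) ^- 2)); last first.
  move=> k k_range; rewrite codegreeR_col_even half_q half_q2 sqnorm1 sqnorm0.
  rewrite sum_iota_cst (@sum_sqnorm_cs_odd _ (m - 1) _ _ k); [|lia..].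
  by congr (_ ^- 2); rewrite m1; ring.
rewrite (@sum_iota_eq_cst _ m _ ((2 * m%:R + 1) ^- 2)); last first.
  move=> k k_range; rewrite codegreeR_col_even half_q half_q2 sqnormN sqnorm1 sqnorm0.
  rewrite sum_iota_cst; under eq_bigr do rewrite sqnormN.
  rewrite (@sum_sqnorm_cs_odd _ m _ _ k); [|lia..].
  by congr (_ ^- 2); ring.
by rewrite m1 addrA; congr (_ ^- 2 + _ + _); ring.
Qed.

Lemma tail_table_m1E m :
  \sum_(s <- behead (table_m1 R (4 * m + 3))) codegreeR s ^- 2
  = 2 * (4 * m%:R + 3) ^- 2 + m%:R * (2 * m%:R + 1) ^- 2
    + m%:R * (2 * m%:R + 2) ^- 2 + (4 * m%:R + 4) ^- 2.
Proof.
have quarter_q : ((4 * m + 3 - 3) %/ 4 = m)%N by lia.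
have quarter_q1 : ((4 * m + 3 + 1) %/ 4 = m + 1)%N by lia.
have q_nat : (4 * m + 3)%:R = 4 * m%:R + 3 :> R by rewrite natrD natrM.
have codegree_D k : codegreeR (col_m1 (4 * m + 3) 1
    (fun c => (-1 + 'i * sgn R (k + c) * sqrtC (4 * m + 3)%:R) / 2)
    (fun=> -1) 0 (fun=> 1)) = 4 * m%:R + 3.
  rewrite codegreeR_col_m1 quarter_q sqnorm1 sqnormN sqnorm1 sqnorm0 !sum_iota_cst.
  rewrite (@sum_iota_eq_cst _ 2 _ ((1 + (4 * m + 3)%:R) / 4)) => [|c _].
    by rewrite q_nat; field.
  exact: sqnorm_D_m1.
rewrite /table_m1 /= quarter_q quarter_q1 !big_cons !big_cat /= big_seq1 !big_map.
rewrite !codegree_D.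
rewrite (@sum_iota_eq_cst _ m _ ((2 * m%:R + 1) ^- 2)); last first.
  move=> k k_range; rewrite codegreeR_col_m1 quarter_q sqnorm1 sqnorm0 !sum_iota_cst.
  rewrite (@sum_sqnorm_cs_odd _ m _ (2 * k) k); [|lia..].
  by congr (_ ^- 2); ring.
rewrite (@sum_iota_eq_cst _ m _ ((2 * m%:R + 2) ^- 2)); last first.
  move=> k k_range; rewrite codegreeR_col_m1 quarter_q sqnormN sqnorm1 sqnorm0.
  rewrite sqnorm_sgn !sum_iota_cst; under eq_bigr do rewrite sqnormN.
  rewrite (@sum_sqnorm_cs_even _ m _ (2 * k) k); [|lia..].
  by congr (_ ^- 2); ring.
rewrite codegreeR_col_m1 quarter_q sqnorm1 sqnormN sqnorm1 sqnorm0 sqnorm_sgn !sum_iota_cst.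
under eq_bigr do rewrite sqnormN sqnormM sqnorm_nat sqnorm_sgn.
rewrite sum_iota_cst.
have -> : 1 + 2 * 1 + m%:R * (2 ^+ 2 * 1) + (1 + m%:R * 0) = 4 * m%:R + 4 :> R by ring.
ring.
Qed.

Lemma tail_table_p1E m : (0 < m)%N ->
  \sum_(s <- behead (table_p1 R (4 * m + 1))) codegreeR s ^- 2
  = 2 * (4 * m%:R + 1) ^- 2 + (m%:R - 1) * (2 * m%:R) ^- 2
    + (4 * m%:R) ^- 2 + m%:R * (2 * m%:R + 1) ^- 2.
Proof.
move=> m_gt0.
have quarter_q : ((4 * m + 1 - 1) %/ 4 = m)%N by lia.
have quarter_q5 : ((4 * m + 1 - 5) %/ 4 = m - 1)%N by lia.
have m1 : (m - 1)%:R = m%:R - 1 :> R by rewrite natrB.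
have q_nat : (4 * m + 1)%:R = 4 * m%:R + 1 :> R by rewrite natrD natrM.
have codegree_D k : codegreeR (col_p1 (4 * m + 1) 1
    (fun c => (1 + sgn R (k + c) * sqrtC (4 * m + 1)%:R) / 2)
    (fun=> -1) 0 (fun=> 1)) = 4 * m%:R + 1.
  rewrite codegreeR_col_p1 quarter_q quarter_q5 sqnorm1 sqnormN sqnorm1 sqnorm0.
  by rewrite !sum_iota_cst big_cons big_seq1 sqnorm_D_p1 m1 q_nat; field.
rewrite /table_p1 /= quarter_q quarter_q5 !big_cons !big_cat /= big_cons !big_map.
rewrite !codegree_D.
rewrite (@sum_iota_eq_cst _ (m - 1) _ ((2 * m%:R) ^- 2)); last first.
  move=> k k_range; rewrite codegreeR_col_p1 quarter_q quarter_q5 sqnorm1 sqnorm0.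
  rewrite sqnorm_sgn !sum_iota_cst (@sum_sqnorm_cs_even _ (m - 1) _ (2 * k) k); [|lia..].
  by congr (_ ^- 2); rewrite m1; ring.
rewrite (@sum_iota_eq_cst _ m _ ((2 * m%:R + 1) ^- 2)); last first.
  move=> k k_range; rewrite codegreeR_col_p1 quarter_q quarter_q5 sqnormN sqnorm1 sqnorm0.
  rewrite !sum_iota_cst; under eq_bigr do rewrite sqnormN.
  rewrite (@sum_sqnorm_cs_odd _ m _ (2 * k) k); [|lia..].
  by congr (_ ^- 2); ring.
rewrite codegreeR_col_p1 quarter_q quarter_q5 sqnorm1 sqnorm0 sqnorm_sgn !sum_iota_cst.
under eq_bigr do rewrite sqnormM sqnorm_nat sqnorm_sgn.
rewrite sum_iota_cst m1.
have -> : 1 + 2 * 1 + m%:R * 0 + (1 + (m%:R - 1) * (2 ^+ 2 * 1)) = 4 * m%:R :> R by ring.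
ring.
Qed.

Lemma tail_table_le q : (2 <= q)%N ->
  \sum_(s <- behead (table R q)) codegreeR s ^- 2 <= 2^-1.
Proof.
move=> q_ge2; rewrite /table; case: ifPn => [q_even|q_odd]; last case: ifPn => q_mod4.
- have -> : q = (2 * (q %/ 2))%N by move: q_even; lia.
  rewrite tail_table_evenE; last lia.
  by apply: tail_even_le; rewrite (ler_nat R 1); lia.
- have -> : q = (4 * (q %/ 4) + 3)%N by move: q_mod4; lia.
  by rewrite tail_table_m1E; apply: tail_m1_le.
- have -> : q = (4 * (q %/ 4) + 1)%N by move: q_odd q_mod4; lia.
  rewrite tail_table_p1E; last by move: q_odd q_mod4 q_ge2; lia.
  by apply: tail_p1_le; rewrite (ler_nat R 1); move: q_odd q_mod4 q_ge2; lia.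
Qed.

End Table.

Local Close Scope complex_scope.

Theorem proposition7p5 (R : realType) (q : nat) (hq : (2 <= q)%N) :
  2 * \sum_(s <- table R q) (codegree s) ^- 2
    <= 1 + (codegree (head [::] (table R q)))^-1.
Proof.
apply: codegree_ineq_of_tail (tail_table_le R hq).
apply: le_trans (sqnorm_le_codegreeR (nat_mem_head_table R q)).
have q_ge2 : 2 <= q%:R :> R by rewrite (ler_nat R 2).
by rewrite sqnorm_nat; nra.
Qed.
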